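(* Let $\mathscr C$ be a concept class on a set $\Omega$ and $d\in\mathbb N$. The following are equivalent: (1) $\mathrm{VC}(\mathscr C\,\mathrm{mod}\,\omega_1)\le d$; (2) for every countable subclass $\mathscr C'\subseteq\mathscr C$ there exists a countable set $N\subseteq\Omega$ such that $\mathrm{VC}(\mathscr C'\restriction(\Omega\setminus N))\le d$.
   Context: $\mathrm{VC}(\mathscr C\restriction X)$ is the VC dimension of $\{C\cap X:C\in\mathscr C\}$. $\mathrm{VC}(\mathscr C\,\mathrm{mod}\,\omega_1)$ is the supremum of $n$ for which there exist uncountable sets $A_1,\dots,A_n\subseteq\Omega$ such that for every $J\subseteq\{1,\dots,n\}$ some $C\in\mathscr C$ contains $A_i$ for all $i\in J$ and is disjoint from $A_j$ for all $j\notin J$. *)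

From Stdlib Require Import List Arith.
Import ListNotations.

(* A set is countable (finite or countably infinite) if it is covered by the
   range of a map from nat (option allows the empty set). *)
Definition countable {T : Type} (A : T -> Prop) : Prop :=
  exists f : nat -> option T, forall x, A x -> exists n, f n = Some x.

Definition concept_class (Omega : Type) := (Omega -> Prop) -> Prop.

Definition shatters {Omega : Type} (C : concept_class Omega) (S : list Omega) : Prop :=
  forall J : Omega -> Prop,
    exists c, C c /\ forall x, In x S -> (c x <-> J x).

(* VC(C restricted to X) <= d : every finite S included in X shattered by
   {c ∩ X : c ∈ C} has at most d elements. (For S ⊆ X, being shattered by the
   traces c ∩ X is the same as being shattered by C.) *)
Definition VC_restr_le {Omega : Type} (C : concept_class Omega)
    (X : Omega -> Prop) (d : nat) : Prop :=
  forall S : list Omega, NoDup S -> (forall x, In x S -> X x) ->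
    shatters C S -> length S <= d.

Definition VC_mod_omega1_le {Omega : Type} (C : concept_class Omega) (d : nat) : Prop :=
  forall (n : nat) (A : nat -> Omega -> Prop),
    (forall i, i < n -> ~ countable (A i)) ->
    (forall J : nat -> Prop,
        exists c, C c /\
          forall i, i < n ->
            (J i -> forall x, A i x -> c x) /\
            (~ J i -> forall x, A i x -> ~ c x)) ->
    n <= d.

(* (2) => (1).  If C shatters uncountable sets A_0, ..., A_{n-1}, then
   countably many concepts already do (one for each finite pattern, coded by
   a natural number).  For this countable subclass hypothesis (2) yields a
   countable N; picking x_i in A_i \ N gives n distinct points outside N
   shattered by the subclass, hence n <= d.

   (1) => (2).  Enumerate the countable class C' as E 0, E 1, ...  The
   "atom of x at level a" is the set of points lying in exactly the same
   concepts among E 0, ..., E (a-1) as x.  Let N be the set of points having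
   a countable atom at some level; there are countably many atoms, so N is
   countable.  A finite list S is met by only finitely many traces, so all
   of them are realized below some level a; then the atoms of the points of
   S at level a are shattered by C', and they are uncountable when S avoids
   N.  Hypothesis (1) bounds the length of S by d. *)

From Stdlib Require Import List Arith Cantor Classical ClassicalEpsilon Lia.

Definition shatters_family {Omega : Type} (C : concept_class Omega) (n : nat)
    (A : nat -> Omega -> Prop) : Prop :=
  forall J : nat -> Prop,
    exists c, C c /\
      forall i, i < n ->
        (J i -> forall x, A i x -> c x) /\
        (~ J i -> forall x, A i x -> ~ c x).

Lemma bit_code_exists (P : nat -> Prop) (n : nat) :
  exists m, m < 2 ^ n /\ forall i, i < n -> (Nat.testbit m i = true <-> P i).
Proof.
  assert (Hcode : exists m, forall i, i < n -> (Nat.testbit m i = true <-> P i)).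
  { induction n as [|n [m Hm]].
    - exists 0; intros; lia.
    - destruct (classic (P n)) as [Hp|Hp].
      + exists (Nat.setbit m n). intros i Hi.
        destruct (Nat.eq_dec i n) as [->|Hne].
        * rewrite Nat.setbit_eq; tauto.
        * rewrite Nat.setbit_neq by lia. apply Hm; lia.
      + exists (Nat.clearbit m n). intros i Hi.
        destruct (Nat.eq_dec i n) as [->|Hne].
        * rewrite Nat.clearbit_eq; split; [discriminate|tauto].
        * rewrite Nat.clearbit_neq by lia. apply Hm; lia. }
  destruct Hcode as [m Hm].
  exists (m mod 2 ^ n). split.
  - apply Nat.mod_upper_bound, Nat.pow_nonzero; lia.
  - intros i Hi. rewrite Nat.mod_pow2_bits_low by exact Hi. auto.
Qed.

Lemma common_bound (Q : nat -> nat -> Prop) (K : nat) :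
  (forall m, m < K -> exists i, Q m i) ->
  exists a, forall m, m < K -> exists i, i < a /\ Q m i.
Proof.
  induction K as [|K IH]; intros H.
  - exists 0; intros; lia.
  - destruct IH as [a Ha]. { intros; apply H; lia. }
    destruct (H K) as [i Hi]; [lia|].
    exists (S (a + i)). intros m Hm.
    destruct (Nat.eq_dec m K) as [->|Hne].
    + exists i; split; [lia|exact Hi].
    + destruct (Ha m) as [j [Hj Qj]]; [lia|]. exists j; split; [lia|exact Qj].
Qed.

Lemma finite_choice_list {T : Type} (P : nat -> T -> Prop) (n : nat) :
  (forall i, i < n -> exists x, P i x) ->
  exists l : list T, length l = n /\
    forall i x, nth_error l i = Some x -> P i x.
Proof.
  induction n as [|n IH]; intros H.
  - exists nil. split; [reflexivity|]. intros [|i] x E; discriminate.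
  - destruct IH as [l [Hlen Hl]]. { intros; apply H; lia. }
    destruct (H n) as [x Hx]; [lia|].
    exists (l ++ x :: nil). split.
    + rewrite length_app, Hlen; simpl; lia.
    + intros i y E. destruct (lt_dec i (length l)) as [Hi|Hi].
      * rewrite nth_error_app1 in E by exact Hi. exact (Hl i y E).
      * rewrite nth_error_app2 in E by lia.
        destruct (i - length l) as [|k] eqn:Ek.
        -- injection E as <-. replace i with n by lia. exact Hx.
        -- destruct k; discriminate.
Qed.

Lemma countable_sub {T : Type} (A B : T -> Prop) :
  (forall x, A x -> B x) -> countable B -> countable A.
Proof. intros H [f Hf]. exists f. intros x Ax. apply Hf, H, Ax. Qed.

Lemma uncountable_minus_countable {T : Type} (A N : T -> Prop) :
  ~ countable A -> countable N -> exists x, A x /\ ~ N x.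
Proof.
  intros HA HN. apply NNPP. intro Hno. apply HA.
  apply (countable_sub A N); [|exact HN].
  intros x Ax. apply NNPP. intro Nx. apply Hno. exists x; auto.
Qed.

Lemma countable_union {T : Type} (I : nat -> T -> Prop) :
  countable (fun y => exists k, countable (I k) /\ I k y).
Proof.
  assert (Henum : forall k, exists h : nat -> option T,
     countable (I k) -> forall x, I k x -> exists n, h n = Some x).
  { intro k. destruct (classic (countable (I k))) as [[h Hh]|Hn].
    - exists h; auto.
    - exists (fun _ => None); tauto. }
  destruct (choice _ Henum) as [h Hh].
  exists (fun n => h (fst (Cantor.of_nat n)) (snd (Cantor.of_nat n))).
  intros x [k [Hc Hx]]. destruct (Hh k Hc x Hx) as [m Hm].
  exists (Cantor.to_nat (k, m)). rewrite Cantor.cancel_of_to. exact Hm.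
Qed.

Lemma countable_enumeration {T : Type} (C : T -> Prop) :
  countable C -> (exists c, C c) ->
  exists E : nat -> T, (forall i, C (E i)) /\ forall c, C c -> exists i, E i = c.
Proof.
  intros [f Hf] [c0 Hc0].
  exists (fun n => match f n with
                   | Some c => if excluded_middle_informative (C c) then c else c0
                   | None => c0 end).
  split.
  - intro i. destruct (f i) as [c|]; [|exact Hc0].
    destruct (excluded_middle_informative (C c)); assumption.
  - intros c Hc. destruct (Hf c Hc) as [n Hn]. exists n. rewrite Hn.
    destruct (excluded_middle_informative (C c)); tauto.
Qed.

Lemma shatters_family_mono {Omega : Type} (C C' : concept_class Omega) n A :
  (forall c, C' c -> C c) -> shatters_family C' n A -> shatters_family C n A.
Proof.
  intros Hsub Hsh J. destruct (Hsh J) as [c [Hc Hreal]]. exists c; auto.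
Qed.

(* One concept per coded pattern suffices to shatter a family. *)
Lemma countable_shattering_subclass {Omega : Type} (C : concept_class Omega)
    n A :
  shatters_family C n A ->
  exists C', (forall c, C' c -> C c) /\ countable C' /\ shatters_family C' n A.
Proof.
  intros Hsh.
  destruct (choice _ (fun m => Hsh (fun i => Nat.testbit m i = true)))
    as [g Hg].
  exists (fun c => exists m, c = g m). split; [|split].
  - intros c [m ->]. apply Hg.
  - exists (fun m => Some (g m)). intros c [m ->]. exists m; reflexivity.
  - intro J. destruct (bit_code_exists J n) as [m [_ Hm]].
    exists (g m). split; [exists m; reflexivity|].
    intros i Hi. destruct (proj2 (Hg m) i Hi) as [Hin Hout].
    split; intro HJ; [apply Hin|apply Hout]; rewrite Hm by exact Hi; exact HJ.
Qed.

Lemma transversal_shattered {Omega : Type} (C : concept_class Omega) n A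
    (l : list Omega) :
  shatters_family C n A -> length l = n ->
  (forall i x, nth_error l i = Some x -> A i x) ->
  NoDup l /\ shatters C l.
Proof.
  intros Hsh Hlen Hl.
  assert (Hidx : forall i x, nth_error l i = Some x -> i < n).
  { intros i x E. rewrite <- Hlen. apply nth_error_Some. congruence. }
  split.
  - apply NoDup_nth_error. intros i j Hi Eij.
    destruct (nth_error l i) as [x|] eqn:Ei; [|apply nth_error_Some in Ei; lia].
    destruct (Nat.eq_dec i j) as [|Hne]; [assumption|exfalso].
    destruct (Hsh (fun k => k = i)) as [c [_ Hc]].
    apply (proj2 (Hc j (Hidx j x (eq_sym Eij))) (fun E => Hne (eq_sym E)) x).
    + apply Hl. congruence.
    + apply (proj1 (Hc i (Hidx i x Ei)) eq_refl). apply Hl, Ei.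
  - intro J'.
    destruct (Hsh (fun i => exists x, nth_error l i = Some x /\ J' x))
      as [c [Hc Hreal]].
    exists c. split; [exact Hc|]. intros x Hx.
    destruct (In_nth_error l x Hx) as [i Ei].
    destruct (Hreal i (Hidx i x Ei)) as [Hin Hout]. split.
    + intro Hcx. apply NNPP. intro HJ.
      assert (Hnot : ~ exists y, nth_error l i = Some y /\ J' y).
      { intros [y [Ey Jy]]. apply HJ. congruence. }
      exact (Hout Hnot x (Hl i x Ei) Hcx).
    + intro HJ. apply (Hin (ex_intro _ x (conj Ei HJ)) x (Hl i x Ei)).
Qed.

(* Implication (2) => (1): pick points of the shattered uncountable sets
   outside the countable exceptional set of a countable shattering subclass. *)
Lemma mod_bound_of_trace_bound {Omega : Type} (C : concept_class Omega) d :
  (forall C' : concept_class Omega,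
     (forall c, C' c -> C c) -> countable C' ->
     exists N : Omega -> Prop, countable N /\
       VC_restr_le C' (fun x => ~ N x) d) ->
  VC_mod_omega1_le C d.
Proof.
  intros Htrace n A Hunc Hsh.
  destruct (countable_shattering_subclass C n A Hsh)
    as [C' [Hsub [Hcnt Hsh']]].
  destruct (Htrace C' Hsub Hcnt) as [N [HN Hvc]].
  destruct (finite_choice_list (fun i x => A i x /\ ~ N x) n) as [l [Hlen Hl]].
  { intros i Hi. exact (uncountable_minus_countable _ _ (Hunc i Hi) HN). }
  destruct (transversal_shattered C' n A l Hsh' Hlen (fun i x E => proj1 (Hl i x E)))
    as [Hnd Hshl].
  rewrite <- Hlen. apply Hvc; [exact Hnd| |exact Hshl].
  intros x Hx. destruct (In_nth_error l x Hx) as [i Ei]. apply (Hl i x Ei).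
Qed.

(* A sequence of sets has only finitely many traces on a finite list: each
   trace is already the trace of one of the first a sets. *)
Lemma finite_traces {Omega : Type} (E : nat -> Omega -> Prop) (S : list Omega) :
  exists a, forall i, exists i', i' < a /\
    forall x, In x S -> (E i x <-> E i' x).
Proof.
  set (code := fun m i => forall j, j < length S ->
         (Nat.testbit m j = true <-> exists x, nth_error S j = Some x /\ E i x)).
  destruct (common_bound (fun m i' => ~ (exists i, code m i) \/ code m i')
                         (2 ^ length S)) as [a Ha].
  { intros m _. destruct (classic (exists i, code m i)) as [[i Hi]|Hno].
    - exists i; right; exact Hi.
    - exists 0; left; exact Hno. }
  exists a. intro i.
  destruct (bit_code_exists (fun j => exists x, nth_error S j = Some x /\ E i x)
              (length S)) as [m [Hm Hcode]].
  destruct (Ha m Hm) as [i' [Hi' [Hno|Hcode']]]; [exfalso; eauto|].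
  exists i'. split; [exact Hi'|]. intros x Hx.
  destruct (In_nth_error S x Hx) as [j Ej].
  assert (Hj : j < length S) by (apply nth_error_Some; congruence).
  (* Both i and i' have bit j of m as membership indicator of x. *)
  assert (Hbit : forall k, code m k -> (E k x <-> Nat.testbit m j = true)).
  { intros k Hk. rewrite (Hk j Hj). split.
    - intro Hkx. exists x; auto.
    - intros [y [Ey Hy]]. congruence. }
  rewrite (Hbit i Hcode), (Hbit i' Hcode'). reflexivity.
Qed.

Section Atoms.

Variable Omega : Type.
Variable E : nat -> Omega -> Prop.

Definition atom (a : nat) (x : Omega) : Omega -> Prop :=
  fun y => forall i, i < a -> (E i x <-> E i y).

Definition thin_points : Omega -> Prop :=
  fun x => exists a, countable (atom a x).

(* There are countably many atoms (indexed by a level and a bit code), so the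
   thin points form a countable set. *)
Lemma thin_points_countable : countable thin_points.
Proof.
  set (coded := fun k y => forall i, i < fst (Cantor.of_nat k) ->
                  (E i y <-> Nat.testbit (snd (Cantor.of_nat k)) i = true)).
  apply (countable_sub _ (fun y => exists k, countable (coded k) /\ coded k y));
    [|apply countable_union].
  intros x [a Hcnt].
  destruct (bit_code_exists (fun i => E i x) a) as [b [_ Hb]].
  exists (Cantor.to_nat (a, b)). unfold coded. rewrite Cantor.cancel_of_to; simpl.
  split.
  - apply (countable_sub _ (atom a x)); [|exact Hcnt].
    intros y Hy i Hi. rewrite (Hy i Hi), (Hb i Hi). tauto.
  - intros i Hi. rewrite (Hb i Hi). tauto.
Qed.

Variable C' : concept_class Omega.
Hypothesis E_in : forall i, C' (E i).
Hypothesis E_onto : forall c, C' c -> exists i, E i = c.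

(* If C' shatters a list S of distinct points, it shatters the atoms of those
   points at a level below which all traces on S are realized. *)
Lemma atoms_shattered (S : list Omega) :
  NoDup S -> shatters C' S ->
  exists a, shatters_family C' (length S)
              (fun j y => exists x, nth_error S j = Some x /\ atom a x y).
Proof.
  intros Hnd Hsh. destruct (finite_traces E S) as [a Ha].
  exists a. intro J.
  set (J' := fun x => exists j, J j /\ nth_error S j = Some x).
  destruct (Hsh J') as [c [Hc Hreal]].
  destruct (E_onto c Hc) as [i <-].
  destruct (Ha i) as [i' [Hi' Hsame]].
  assert (HJ : forall j x, nth_error S j = Some x -> (E i' x <-> J j)).
  { intros j x Ej. pose proof (nth_error_In S j Ej) as Hx.
    rewrite <- (Hsame x Hx), (Hreal x Hx).
    split.
    - intros [k [Jk Ek]].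
      replace j with k; [exact Jk|].
      apply (proj1 (NoDup_nth_error S) Hnd); [apply nth_error_Some|]; congruence.
    - intro Jj. exists j; auto. }
  exists (E i'). split; [apply E_in|]. intros j _. split.
  - intros Jj y [x [Ej Hy]]. apply (Hy i' Hi'), (HJ j x Ej), Jj.
  - intros Jj y [x [Ej Hy]] Hiy. apply Jj, (HJ j x Ej), (Hy i' Hi'), Hiy.
Qed.

End Atoms.

Lemma trace_bound_of_mod_bound {Omega : Type} (C C' : concept_class Omega) d
    (E : nat -> Omega -> Prop) :
  VC_mod_omega1_le C d -> (forall c, C' c -> C c) ->
  (forall i, C' (E i)) -> (forall c, C' c -> exists i, E i = c) ->
  VC_restr_le C' (fun x => ~ thin_points Omega E x) d.
Proof.
  intros Hmod Hsub E_in E_onto S Hnd Hout Hsh.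
  destruct (atoms_shattered Omega E C' E_in E_onto S Hnd Hsh) as [a Hatoms].
  refine (Hmod _ _ _ (shatters_family_mono C C' _ _ Hsub Hatoms)).
  intros j Hj Hcnt.
  destruct (nth_error S j) as [x|] eqn:Ej in Hj;
    [|apply nth_error_Some in Hj; contradiction].
  apply (Hout x (nth_error_In S j Ej)). exists a.
  apply (countable_sub _ _ (fun y Hy => ex_intro _ x (conj Ej Hy)) Hcnt).
Qed.

Theorem mainTheorem17 (Omega : Type) (C : concept_class Omega) (d : nat) :
  VC_mod_omega1_le C d <->
  (forall C' : concept_class Omega,
     (forall c, C' c -> C c) -> countable C' ->
     exists N : Omega -> Prop, countable N /\
       VC_restr_le C' (fun x => ~ N x) d).
Proof.
  split; [|apply mod_bound_of_trace_bound].
  intros Hmod C' Hsub Hcnt.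
  destruct (classic (exists c, C' c)) as [Hne|Hempty].
  - destruct (countable_enumeration C' Hcnt Hne) as [E [E_in E_onto]].
    exists (thin_points Omega E). split; [apply thin_points_countable|].
    exact (trace_bound_of_mod_bound C C' d E Hmod Hsub E_in E_onto).
  - (* An empty class shatters no list, not even the empty one. *)
    exists (fun _ => False). split.
    + exists (fun _ => None). intros x [].
    + intros S _ _ Hsh. destruct (Hsh (fun _ => True)) as [c [Hc _]].
      exfalso. eauto.
Qed.
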